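(* Let $(S,\mathcal{S})$ be a measurable space and let $\mathcal{E}\subseteq\mathcal{P}(S)$ be a $\cap$-stable collection with $\sigma(\mathcal{E})=\mathcal{S}$, $\emptyset\in\mathcal{E}$ and $\mathcal{E}\subseteq (\mathcal{E}_{int})_{\sigma}$. If $\pi$ is a constructive cr-set, then \[ T_{\pi}(A)=\sup\{ T_{\pi}(F)\mid F\in\mathcal{E}_{int},\,F\subseteq A\}\quad\text{for all } A\in\mathcal{S}.\]
   Context: $(\Omega,\mathcal{F},P)$ is a probability space; $C(S)$ is the set of countable subsets of $S$; $N_A(M)=|A\cap M|$; $\mathcal{C}(\mathcal{S})=\sigma(N_A\mid A\in\mathcal{S})$; a cr-set is an $\mathcal{F}$-$\mathcal{C}(\mathcal{S})$ measurable map $\pi:\Omega\to C(S)$, finite if its values are finite; a map $\tau:\Omega\to C(S)$ is constructive if $\tau(\omega)=\bigcup_k\pi_k(\omega)$ for all $\omega$ for some finite cr-sets $\pi_k$, $k\in\mathbb{N}$. The hitting function is $T_\pi(A)=P(\pi\cap A\neq\emptyset)$, $A\in\mathcal{S}$. For a nonempty family $\mathcal{E}$: $\mathcal{E}_\sigma$ is the family of countable unions of $\mathcal{E}$-sets (empty union not included); $\mathcal{E}_{int}=\{\bigcap_n (S\setminus E_n)\mid E_n\in\mathcal{E}\}$. *)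

From Stdlib Require Import Reals List.
Open Scope R_scope.

Definition sigma_algebra {T : Type} (F : (T -> Prop) -> Prop) : Prop :=
  F (fun _ => True) /\
  (forall A, F A -> F (fun x => ~ A x)) /\
  (forall A : nat -> T -> Prop, (forall n, F (A n)) -> F (fun x => exists n, A n x)).

Definition sigma_gen {T : Type} (G : (T -> Prop) -> Prop) : (T -> Prop) -> Prop :=
  fun X => forall Sig : (T -> Prop) -> Prop,
    sigma_algebra Sig -> (forall g, G g -> Sig g) -> Sig X.

Definition probability {Om : Type} (F : (Om -> Prop) -> Prop)
  (P : (Om -> Prop) -> R) : Prop :=
  sigma_algebra F /\
  (forall A, F A -> 0 <= P A) /\
  P (fun _ => True) = 1 /\
  (forall A : nat -> Om -> Prop,
     (forall n, F (A n)) ->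
     (forall m n x, m <> n -> A m x -> A n x -> False) ->
     infinite_sum (fun n => P (A n)) (P (fun x => exists n, A n x))).

Definition countable {S : Type} (M : S -> Prop) : Prop :=
  exists f : S -> nat, forall x y, M x -> M y -> f x = f y -> x = y.

Definition has_card {S : Type} (X : S -> Prop) (n : nat) : Prop :=
  exists l : list S, NoDup l /\ length l = n /\ (forall x, X x <-> In x l).

Definition finite_set {S : Type} (X : S -> Prop) : Prop := exists n, has_card X n.

Definition CS (S : Type) : Type := { M : S -> Prop | countable M }.

(* N_A(M) = |A ∩ M| in N ∪ {∞}, with None standing for ∞ (given as a
   functional relation). *)
Definition NA {S : Type} (A : S -> Prop) (M : CS S) (k : option nat) : Prop :=
  match k with
  | Some n => has_card (fun x => A x /\ proj1_sig M x) n
  | None => ~ finite_set (fun x => A x /\ proj1_sig M x)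
  end.

(* 𝒞(𝒮) = σ(N_A | A ∈ 𝒮), with N ∪ {∞} carrying its discrete sigma-algebra:
   generated by the preimages N_A^{-1}(B), B ⊆ N ∪ {∞}. *)
Definition CSigma {S : Type} (SS : (S -> Prop) -> Prop) : (CS S -> Prop) -> Prop :=
  sigma_gen (fun Y => exists (A : S -> Prop) (B : option nat -> Prop),
                SS A /\ forall M, Y M <-> (exists k, NA A M k /\ B k)).

Definition cr_set {Om S : Type} (F : (Om -> Prop) -> Prop)
  (SS : (S -> Prop) -> Prop) (pi : Om -> CS S) : Prop :=
  forall Y, CSigma SS Y -> F (fun w => Y (pi w)).

Definition finite_cr_set {Om S : Type} (F : (Om -> Prop) -> Prop)
  (SS : (S -> Prop) -> Prop) (pi : Om -> CS S) : Prop :=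
  cr_set F SS pi /\ forall w, finite_set (proj1_sig (pi w)).

Definition constructive {Om S : Type} (F : (Om -> Prop) -> Prop)
  (SS : (S -> Prop) -> Prop) (tau : Om -> CS S) : Prop :=
  exists pik : nat -> Om -> CS S,
    (forall k, finite_cr_set F SS (pik k)) /\
    forall w x, proj1_sig (tau w) x <-> exists k, proj1_sig (pik k w) x.

Definition hitting {Om S : Type} (P : (Om -> Prop) -> R) (pi : Om -> CS S)
  (A : S -> Prop) : R :=
  P (fun w => exists x, proj1_sig (pi w) x /\ A x).

Definition Eint {S : Type} (E : (S -> Prop) -> Prop) : (S -> Prop) -> Prop :=
  fun X => exists En : nat -> S -> Prop,
    (forall n, E (En n)) /\ forall x, X x <-> (forall n, ~ En n x).

(* G_σ: (nonempty) countable unions of G-sets. A nonempty countable family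
   can be enumerated (with repetitions) by nat. *)
Definition sigma_unions {S : Type} (G : (S -> Prop) -> Prop) : (S -> Prop) -> Prop :=
  fun X => exists Gn : nat -> S -> Prop,
    (forall n, G (Gn n)) /\ forall x, X x <-> (exists n, Gn n x).

(* Call A inner approximable for a random set rho if for every eps > 0 some
   G ∈ E_int with G ⊆ A satisfies P(rho meets A \ G) < eps.

   For rho finite-valued with measurable hitting events,
      every A in 𝒮 is inner approximable.  This is a good-set argument: the
      measurable A such that both A and its complement are inner approximable
      contain E (E ⊆ (E_int)_σ, and a finite set eventually misses a decreasing
      sequence of sets with empty intersection), and are closed under
      complements and countable unions (E_int is closed under finite unions and
      countable intersections; errors eps / 2^(n+1) add up to eps).
   2. Constructive sets.  If pi = ⋃_k pi_k with finite cr-sets pi_k, the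
      truncations pi_0 ∪ ... ∪ pi_N are finite and increase to pi, so
      T_pi(A) = lim_N P(pi_0 ∪ ... ∪ pi_N meets A); applying 1 to one large
      truncation yields G ∈ E_int, G ⊆ A with T_pi(G) close to T_pi(A). *)

From Stdlib Require Import Reals Lra Lia List ClassicalEpsilon
  FunctionalExtensionality PropExtensionality Cantor.
Open Scope R_scope.

Lemma set_ext {T : Type} (A B : T -> Prop) : (forall x, A x <-> B x) -> A = B.
Proof.
  intro H; apply functional_extensionality; intro x.
  apply propositional_extensionality; auto.
Qed.

Section SigmaAlgebra.
Context {T : Type} (Sg : (T -> Prop) -> Prop) (HSg : sigma_algebra Sg).

Lemma sa_compl (A : T -> Prop) : Sg A -> Sg (fun x => ~ A x).
Proof. apply HSg. Qed.

Lemma sa_cunion (A : nat -> T -> Prop) :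
  (forall n, Sg (A n)) -> Sg (fun x => exists n, A n x).
Proof. apply HSg. Qed.

Lemma sa_empty : Sg (fun _ => False).
Proof.
  replace (fun _ : T => False) with (fun x : T => ~ (fun _ => True) x)
    by (apply set_ext; tauto).
  apply sa_compl, HSg.
Qed.

Lemma sa_union2 (A B : T -> Prop) : Sg A -> Sg B -> Sg (fun x => A x \/ B x).
Proof.
  intros HA HB.
  replace (fun x => A x \/ B x)
    with (fun x => exists n, match n with 0%nat => A x | _ => B x end).
  - apply sa_cunion; intros [|n]; auto.
  - apply set_ext; intro x; split.
    + intros [[|n] Hn]; auto.
    + intros [Ha|Hb]; [exists 0%nat | exists 1%nat]; auto.
Qed.

Lemma sa_inter2 (A B : T -> Prop) : Sg A -> Sg B -> Sg (fun x => A x /\ B x).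
Proof.
  intros HA HB.
  replace (fun x => A x /\ B x) with (fun x => ~ (~ A x \/ ~ B x))
    by (apply set_ext; intro x; tauto).
  apply sa_compl, sa_union2; apply sa_compl; auto.
Qed.

Lemma sa_cinter (A : nat -> T -> Prop) :
  (forall n, Sg (A n)) -> Sg (fun x => forall n, A n x).
Proof.
  intro HA.
  replace (fun x => forall n, A n x) with (fun x => ~ exists n, ~ A n x).
  - apply sa_compl, sa_cunion; intro n; apply sa_compl, HA.
  - apply set_ext; intro x; split; [intros H n; apply NNPP; eauto | firstorder].
Qed.

Lemma sa_diff (A B : T -> Prop) : Sg A -> Sg B -> Sg (fun x => A x /\ ~ B x).
Proof. intros; apply sa_inter2; [|apply sa_compl]; auto. Qed.

End SigmaAlgebra.

Lemma sigma_gen_incl {T : Type} (G : (T -> Prop) -> Prop) (X : T -> Prop) :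
  G X -> sigma_gen G X.
Proof. intros HX Sig _ HG; auto. Qed.

Definition union_upto {T : Type} (K : nat -> T -> Prop) (N : nat) : T -> Prop :=
  fun x => exists n, (n <= N)%nat /\ K n x.

Lemma union_upto_0 {T : Type} (K : nat -> T -> Prop) : union_upto K 0 = K 0%nat.
Proof.
  apply set_ext; intro x; split; [|intro; exists 0%nat; auto].
  intros [n [Hn Hx]]; replace n with 0%nat in Hx by lia; exact Hx.
Qed.

Lemma union_upto_incr {T : Type} (K : nat -> T -> Prop) (N : nat) (x : T) :
  union_upto K N x -> union_upto K (S N) x.
Proof. intros [n [Hn Hx]]; exists n; split; [lia | exact Hx]. Qed.

Lemma union_upto_exhaust {T : Type} (K : nat -> T -> Prop) (x : T) :
  (exists N, union_upto K N x) <-> exists n, K n x.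
Proof.
  split; [intros [N [n [_ Hn]]] | intros [n Hn]; exists n, n]; eauto.
Qed.

Lemma union_upto_closed {T : Type} (Q : (T -> Prop) -> Prop) (K : nat -> T -> Prop) :
  (forall A B, Q A -> Q B -> Q (fun x => A x \/ B x)) -> (forall n, Q (K n)) ->
  forall N, Q (union_upto K N).
Proof.
  intros Hunion HK N; induction N as [|N IH].
  - rewrite union_upto_0; auto.
  - replace (union_upto K (S N)) with (fun x => union_upto K N x \/ K (S N) x); auto.
    apply set_ext; intro x; split.
    + intros [Hx|Hx]; [apply union_upto_incr | exists (S N)]; auto.
    + intros [n [Hn Hx]]; destruct (Nat.eq_dec n (S N)) as [->|]; auto.
      left; exists n; split; [lia | exact Hx].
Qed.

Lemma cv_eventually_const (u : nat -> R) (c : R) (N : nat) :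
  (forall n, (N <= n)%nat -> u n = c) -> Un_cv u c.
Proof.
  intros Hu eps Heps; exists N; intros n Hn.
  rewrite Hu by lia; unfold Rdist; rewrite Rminus_diag, Rabs_R0; lra.
Qed.

Section Probability.
Context {Om : Type} (F : (Om -> Prop) -> Prop) (P : (Om -> Prop) -> R)
  (HP : probability F P).

Let HF : sigma_algebra F := proj1 HP.
Let P_nonneg : forall A, F A -> 0 <= P A := proj1 (proj2 HP).
Let P_full : P (fun _ => True) = 1 := proj1 (proj2 (proj2 HP)).
Let P_sigma_add := proj2 (proj2 (proj2 HP)).
Let F_compl := sa_compl F HF.
Let F_empty := sa_empty F HF.
Let F_union2 := sa_union2 F HF.
Let F_diff := sa_diff F HF.

Lemma P_empty : P (fun _ => False) = 0.
Proof.
  assert (Hsum := P_sigma_add (fun _ _ => False) (fun _ => F_empty)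
                   (fun _ _ _ _ H _ => H)); cbv beta in Hsum.
  replace (fun _ : Om => exists _ : nat, False) with (fun _ : Om => False)
    in Hsum by (apply set_ext; firstorder).
  set (x := P (fun _ => False)) in *.
  (* consecutive partial sums differ by x, and also converge to the same limit *)
  assert (Hdiff := CV_minus _ _ _ _ (CV_shift' _ 1 _ Hsum) Hsum).
  rewrite Rminus_diag in Hdiff.
  apply UL_sequence with (fun _ : nat => x);
    [exact (cv_eventually_const _ _ 0 (fun _ _ => eq_refl))|].
  apply Un_cv_ext with (2 := Hdiff); intro n.
  rewrite Nat.add_1_r, tech5; ring.
Qed.

Lemma P_union2 (A B : Om -> Prop) : F A -> F B ->
  (forall x, A x -> B x -> False) -> P (fun x => A x \/ B x) = P A + P B.
Proof.
  intros HA HB Hdisj.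
  set (s := fun n : nat =>
             match n with 0%nat => A | 1%nat => B | _ => fun _ => False end).
  replace (fun x => A x \/ B x) with (fun x => exists n, s n x).
  - apply UL_sequence with (sum_f_R0 (fun n => P (s n))).
    + apply P_sigma_add.
      * intros [|[|n]]; simpl; auto.
      * intros [|[|m]] [|[|n]] x Hmn; simpl; try tauto; eauto; lia.
    + apply cv_eventually_const with 1%nat; intros n Hn.
      induction Hn; [reflexivity|].
      rewrite tech5, IHHn; destruct m as [|m]; [lia|]; simpl; rewrite P_empty; ring.
  - apply set_ext; intro x; split.
    + intros [[|[|n]] Hn]; simpl in Hn; tauto.
    + intros [Ha|Hb]; [exists 0%nat | exists 1%nat]; auto.
Qed.

Lemma P_compl (A : Om -> Prop) : F A -> P (fun x => ~ A x) = 1 - P A.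
Proof.
  intro HA. rewrite <- P_full.
  replace (fun _ : Om => True) with (fun x => A x \/ ~ A x)
    by (apply set_ext; intro x; split; auto using classic).
  rewrite P_union2; auto; ring.
Qed.

Lemma P_mono (A B : Om -> Prop) : F A -> F B ->
  (forall x, A x -> B x) -> P A <= P B.
Proof.
  intros HA HB Hsub.
  replace B with (fun x => A x \/ (B x /\ ~ A x))
    by (apply set_ext; intro x; split; [intros [H|[H _]]; auto | intro H;
        destruct (classic (A x)); auto]).
  rewrite P_union2; auto; [|tauto].
  assert (0 <= P (fun x => B x /\ ~ A x)) by auto. lra.
Qed.

Lemma P_subadd2 (A B C : Om -> Prop) : F A -> F B -> F C ->
  (forall x, C x -> A x \/ B x) -> P C <= P A + P B.
Proof.
  intros HA HB HC Hcov.
  apply Rle_trans with (P (fun x => A x \/ (B x /\ ~ A x))).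
  - apply P_mono; auto.
    intros x Hx; destruct (classic (A x)); destruct (Hcov x Hx); tauto.
  - rewrite P_union2; auto; [|tauto].
    apply Rplus_le_compat_l, P_mono; auto; tauto.
Qed.

(* Continuity from below, via the disjoint pieces C (S n) \ C n. *)
Lemma P_increasing_union (C : nat -> Om -> Prop) :
  (forall n, F (C n)) -> (forall n x, C n x -> C (S n) x) ->
  Un_cv (fun n => P (C n)) (P (fun x => exists n, C n x)).
Proof.
  intros HC Hinc.
  assert (Hle : forall m n x, (m <= n)%nat -> C m x -> C n x)
    by (intros m n x Hmn; induction Hmn; auto).
  set (D := fun n => match n with
                     | 0%nat => C 0%nat
                     | S m => fun x => C (S m) x /\ ~ C m x end).
  assert (HD : forall n, F (D n)) by (intros [|n]; simpl; auto).
  assert (Hpartial : forall N, sum_f_R0 (fun n => P (D n)) N = P (C N)).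
  { induction N as [|N IH]; [reflexivity|].
    rewrite tech5, IH; simpl; rewrite <- P_union2; auto; [|tauto].
    f_equal; apply set_ext; intro x; split; [intros [H|[H _]]; auto|].
    intro H; destruct (classic (C N x)); auto. }
  apply Un_cv_ext with (1 := Hpartial).
  replace (fun x => exists n, C n x) with (fun x => exists n, D n x).
  - apply P_sigma_add; auto.
    assert (Hlt : forall m n x, (m < n)%nat -> D m x -> D n x -> False).
    { intros m [|n] x Hmn Hm Hn; [lia|]. destruct Hn as [_ Hn].
      apply Hn, Hle with m; [lia|]. destruct m; simpl in Hm; tauto. }
    intros m n x Hmn; destruct (Nat.lt_gt_cases m n) as [[|] _]; eauto.
  - apply set_ext; intro x; split.
    + intros [[|n] Hn]; [exists 0%nat | exists (S n)]; simpl in Hn; tauto.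
    + intros [n Hn]; induction n as [|n IH]; [exists 0%nat; auto|].
      destruct (classic (C n x)); auto. exists (S n); simpl; auto.
Qed.

Lemma P_vanishing (B : nat -> Om -> Prop) :
  (forall n, F (B n)) -> (forall n x, B (S n) x -> B n x) ->
  (forall x, exists n, ~ B n x) ->
  forall eps, eps > 0 -> exists N, P (B N) < eps.
Proof.
  intros HB Hdec Hempty eps Heps.
  assert (Hcv := P_increasing_union (fun n x => ~ B n x)
                   (fun n => F_compl _ (HB n)) (fun n x Hn H => Hn (Hdec n x H))); cbv beta in Hcv.
  replace (fun x => exists n, ~ B n x) with (fun _ : Om => True) in Hcv
    by (apply set_ext; intro x; split; auto).
  destruct (Hcv eps Heps) as [N HN]; exists N.
  specialize (HN N (le_n _)); unfold Rdist in HN.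
  rewrite P_full, P_compl in HN by auto. apply Rabs_def2 in HN. lra.
Qed.

Lemma P_geometric_subadd (C : nat -> Om -> Prop) (eps : R) :
  (forall n, F (C n)) -> (forall n, P (C n) <= eps / 2 ^ S n) ->
  P (fun x => exists n, C n x) <= eps.
Proof.
  intros HC Hbound.
  assert (Heps : 0 <= eps).
  { specialize (Hbound 0%nat); specialize (P_nonneg _ (HC 0%nat)).
    rewrite pow_1 in Hbound; lra. }
  assert (HU : forall N, F (union_upto C N)) by (apply union_upto_closed; auto).
  assert (Hpartial : forall N, P (union_upto C N) <= eps - eps / 2 ^ S N).
  { induction N as [|N IH].
    - rewrite union_upto_0. specialize (Hbound 0%nat). rewrite pow_1 in *. lra.
    - apply Rle_trans with (P (union_upto C N) + P (C (S N))).
      + apply P_subadd2; auto. intros x [n [Hn Hx]].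
        destruct (Nat.eq_dec n (S N)) as [->|]; auto. left; exists n; split; [lia|auto].
      + specialize (Hbound (S N)).
        assert (Hpow : 2 ^ S (S N) = 2 * 2 ^ S N) by reflexivity.
        assert (0 < 2 ^ S N) by (apply pow_lt; lra).
        replace (eps / 2 ^ S N) with (2 * (eps / 2 ^ S (S N))) in IH
          by (rewrite Hpow; field; lra).
        lra. }
  assert (Hcv := P_increasing_union (union_upto C) HU (union_upto_incr C)).
  replace (fun x => exists n, union_upto C n x) with (fun x => exists n, C n x) in Hcv
    by (apply set_ext; intro x; symmetry; apply union_upto_exhaust).
  apply Rle_cv_lim with (2 := Hcv) (3 := cv_eventually_const (fun _ => eps) eps 0 (fun _ _ => eq_refl)).
  intro N; specialize (Hpartial N).
  assert (0 <= eps / 2 ^ S N) by (apply Rmult_le_pos; [|apply Rlt_le, Rinv_0_lt_compat, pow_lt]; lra).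
  lra.
Qed.

End Probability.

Section IntersectionClass.
Context {U : Type} (E : (U -> Prop) -> Prop).

(* If E is ∩-stable, E_int is closed under binary unions:
   (⋂_n ~E1_n) ∪ (⋂_m ~E2_m) = ⋂_(n,m) ~(E1_n ∩ E2_m). *)
Lemma Eint_union2 :
  (forall A B, E A -> E B -> E (fun x => A x /\ B x)) ->
  forall G1 G2, Eint E G1 -> Eint E G2 -> Eint E (fun x => G1 x \/ G2 x).
Proof.
  intros Hcap G1 G2 [E1 [HE1 H1]] [E2 [HE2 H2]].
  exists (fun k x => E1 (fst (of_nat k)) x /\ E2 (snd (of_nat k)) x); split.
  - intro k; apply Hcap; auto.
  - intro x; split.
    + intros [Hg|Hg] k [Ha Hb]; [eapply H1 | eapply H2]; eauto.
    + intro H. destruct (classic (G2 x)) as [Hg|Hg]; auto. left; apply H1; intros n Hn.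
      apply Hg, H2; intros m Hm.
      apply (H (to_nat (n, m))); rewrite cancel_of_to; auto.
Qed.

(* E_int is closed under countable intersections (Cantor pairing of the indices). *)
Lemma Eint_cinter (G : nat -> U -> Prop) :
  (forall n, Eint E (G n)) -> Eint E (fun x => forall n, G n x).
Proof.
  intros HG; apply choice in HG; destruct HG as [En HEn].
  exists (fun k => En (fst (of_nat k)) (snd (of_nat k))); split.
  - intro k; apply HEn.
  - intro x; split.
    + intros H k; apply (HEn (fst (of_nat k))); auto.
    + intros H n; apply (HEn n); intro m.
      specialize (H (to_nat (n, m))); rewrite cancel_of_to in H; exact H.
Qed.

Lemma Eint_compl (X : U -> Prop) : E X -> Eint E (fun x => ~ X x).
Proof.
  intro HX; exists (fun _ => X); split; auto.
  intro x; split; auto. intro H; apply (H 0%nat).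
Qed.

Lemma Eint_measurable (SS : (U -> Prop) -> Prop) :
  sigma_algebra SS -> (forall X, E X -> SS X) -> forall G, Eint E G -> SS G.
Proof.
  intros HSS HESS G [En [HEn HG]].
  replace G with (fun x => ~ exists n, En n x).
  - apply sa_compl, sa_cunion; auto.
  - apply set_ext; intro x; rewrite HG; firstorder.
Qed.

End IntersectionClass.

Definition Hit {Om U : Type} (rho : Om -> U -> Prop) (B : U -> Prop) : Om -> Prop :=
  fun w => exists x, rho w x /\ B x.

Lemma Hit_mono_rho {Om U : Type} (rho rho' : Om -> U -> Prop) (B : U -> Prop) :
  (forall w x, rho w x -> rho' w x) -> forall w, Hit rho B w -> Hit rho' B w.
Proof. intros Hrho w [x [Hx Hb]]; exists x; auto. Qed.

Lemma Hit_mono {Om U : Type} (rho : Om -> U -> Prop) (B B' : U -> Prop) :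
  (forall x, B x -> B' x) -> forall w, Hit rho B w -> Hit rho B' w.
Proof. intros HB w [x [Hx Hb]]; exists x; auto. Qed.

Definition finite_valued {Om U : Type} (rho : Om -> U -> Prop) : Prop :=
  forall w, exists l : list U, forall x, rho w x -> In x l.

Lemma list_escapes {U : Type} (B : nat -> U -> Prop) (l : list U) :
  (forall n x, B (S n) x -> B n x) -> (forall x, exists n, ~ B n x) ->
  exists N, forall x, In x l -> ~ B N x.
Proof.
  intros Hdec Hempty.
  assert (Hle : forall m n x, (m <= n)%nat -> B n x -> B m x)
    by (intros m n x Hmn; induction Hmn; auto).
  induction l as [|a l [N HN]]; [exists 0%nat; intros x []|].
  destruct (Hempty a) as [Na Ha]; exists (Nat.max N Na).
  intros x [<-|Hin] Hx; [apply Ha | apply (HN x Hin)]; apply Hle with (2 := Hx); lia.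
Qed.

Lemma hit_vanishing {Om U : Type} (F : (Om -> Prop) -> Prop) (P : (Om -> Prop) -> R)
  (rho : Om -> U -> Prop) (B : nat -> U -> Prop) :
  probability F P -> finite_valued rho -> (forall n, F (Hit rho (B n))) ->
  (forall n x, B (S n) x -> B n x) -> (forall x, exists n, ~ B n x) ->
  forall eps, eps > 0 -> exists N, P (Hit rho (B N)) < eps.
Proof.
  intros HP Hfin HB Hdec Hempty.
  apply P_vanishing with F; auto.
  - intros n; apply Hit_mono, Hdec.
  - intro w; destruct (Hfin w) as [l Hl]; destruct (list_escapes B l Hdec Hempty) as [N HN].
    exists N; intros [x [Hx Hb]]; exact (HN x (Hl x Hx) Hb).
Qed.

Definition inner_approx {Om U : Type} (P : (Om -> Prop) -> R) (E : (U -> Prop) -> Prop)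
  (rho : Om -> U -> Prop) (A : U -> Prop) : Prop :=
  forall eps, eps > 0 -> exists G, Eint E G /\ (forall x, G x -> A x) /\
    P (Hit rho (fun x => A x /\ ~ G x)) < eps.

Section FiniteRandomSet.
Context {Om U : Type} (F : (Om -> Prop) -> Prop) (P : (Om -> Prop) -> R)
  (SS : (U -> Prop) -> Prop) (E : (U -> Prop) -> Prop) (rho : Om -> U -> Prop).
Hypothesis HP : probability F P.
Hypothesis HSS : sigma_algebra SS.
Hypothesis Hcap : forall A B, E A -> E B -> E (fun x => A x /\ B x).
Hypothesis HE0 : E (fun _ => False).
Hypothesis HESS : forall X, E X -> SS X.
Hypothesis HEu : forall X, E X -> sigma_unions (Eint E) X.
Hypothesis Hhit : forall B, SS B -> F (Hit rho B).
Hypothesis Hfin : finite_valued rho.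

Let HF := proj1 HP.
Let SS_Eint := Eint_measurable E SS HSS HESS.
Let SS_union2 := sa_union2 SS HSS.
Let SS_diff := sa_diff SS HSS.
Let Eint_union := Eint_union2 E Hcap.

(* Sets of E are inner approximable: X = ⋃_n K_n with K_n ∈ E_int, and the
   finite unions of the K_n exhaust X, so X \ (K_0 ∪ ... ∪ K_N) is eventually
   missed by the finite set rho. *)
Lemma approx_E (X : U -> Prop) : E X -> inner_approx P E rho X.
Proof.
  intros HX eps Heps. destruct (HEu X HX) as [K [HK HKX]].
  destruct (hit_vanishing F P rho (fun N x => X x /\ ~ union_upto K N x) HP Hfin)
    with eps as [N HN]; auto.
  - intro N; apply Hhit, SS_diff; auto. apply union_upto_closed; auto.
  - intros n x [H1 H2]; split; auto. intro; apply H2, union_upto_incr; auto.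
  - intro x; destruct (classic (X x)) as [Hx|Hx]; [|exists 0%nat; tauto].
    destruct (proj1 (HKX x) Hx) as [n Hn]; exists n; intros [_ H]; apply H.
    exists n; auto.
  - exists (union_upto K N); repeat split; auto.
    + apply union_upto_closed; auto.
    + intros x [n [_ Hn]]; apply HKX; eauto.
Qed.

(* Complements of E-sets are themselves in E_int. *)
Lemma approx_compl_E (X : U -> Prop) : E X -> inner_approx P E rho (fun x => ~ X x).
Proof.
  intros HX eps Heps; exists (fun x => ~ X x); repeat split; auto using Eint_compl.
  replace (Hit rho _) with (fun _ : Om => False) by (apply set_ext; firstorder).
  rewrite (P_empty F P HP); exact Heps.
Qed.

(* Approximate each A_n with error eps / 2^(n+1); the total error is <= eps. *)
Lemma approx_sequence (A : nat -> U -> Prop) :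
  (forall n, SS (A n)) -> (forall n, inner_approx P E rho (A n)) ->
  forall eps, eps > 0 -> exists G : nat -> U -> Prop,
    (forall n, Eint E (G n) /\ forall x, G n x -> A n x) /\
    P (fun w => exists n, Hit rho (fun x => A n x /\ ~ G n x) w) <= eps.
Proof.
  intros HA Happrox eps Heps.
  assert (Hchoice : forall n, exists G, Eint E G /\ (forall x, G x -> A n x) /\
                      P (Hit rho (fun x => A n x /\ ~ G x)) < eps / 2 ^ S n).
  { intro n; apply Happrox.
    apply Rdiv_lt_0_compat; [lra | apply pow_lt; lra]. }
  apply choice in Hchoice; destruct Hchoice as [G HG]; exists G; split.
  - intro n; split; apply HG.
  - apply P_geometric_subadd with F; auto.
    + intro n; apply Hhit, SS_diff, SS_Eint, HG; auto.
    + intro n; left; apply HG.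
Qed.

(* For an intersection, intersect approximants of the A_n. *)
Lemma approx_cinter (A : nat -> U -> Prop) :
  (forall n, SS (A n)) -> (forall n, inner_approx P E rho (A n)) ->
  inner_approx P E rho (fun x => forall n, A n x).
Proof.
  intros HA Happrox eps Heps.
  destruct (approx_sequence A HA Happrox (eps / 2)) as [G [HG Herr]]; [lra|].
  exists (fun x => forall n, G n x); repeat split.
  - apply Eint_cinter; intro n; apply HG.
  - intros x Hx n; apply HG, Hx.
  - apply Rle_lt_trans with
      (P (fun w => exists n, Hit rho (fun x => A n x /\ ~ G n x) w)); [|lra].
    apply P_mono with F; auto.
    + apply Hhit, SS_diff; [apply sa_cinter|]; auto. apply SS_Eint, Eint_cinter; apply HG.
    + apply sa_cunion; auto; intro n; apply Hhit, SS_diff; auto; apply SS_Eint, HG.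
    + intros w [x [Hx [HAx HGx]]]. apply not_all_ex_not in HGx; destruct HGx as [n Hn].
      exists n, x; auto.
Qed.

(* For a union, first truncate to A_0 ∪ ... ∪ A_N (the rest is eventually missed
   by the finite set rho), then approximate each A_n. *)
Lemma approx_cunion (A : nat -> U -> Prop) :
  (forall n, SS (A n)) -> (forall n, inner_approx P E rho (A n)) ->
  inner_approx P E rho (fun x => exists n, A n x).
Proof.
  intros HA Happrox eps Heps.
  assert (HSA : SS (fun x => exists n, A n x)) by (apply sa_cunion; auto).
  destruct (approx_sequence A HA Happrox (eps / 2)) as [G [HG Herr]]; [lra|].
  destruct (hit_vanishing F P rho (fun N x => (exists n, A n x) /\ ~ union_upto A N x) HP Hfin)
    with (eps / 2) as [N HN]; [| | |lra|].
  - intro N; apply Hhit, SS_diff, union_upto_closed; auto.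
  - intros n x [H1 H2]; split; auto. intro; apply H2, union_upto_incr; auto.
  - intro x; destruct (classic (exists n, A n x)) as [[n Hn]|Hx]; [|exists 0%nat; tauto].
    exists n; intros [_ H]; apply H; exists n; auto.
  - exists (union_upto G N); repeat split.
    + apply union_upto_closed; auto. intro n; apply HG.
    + intros x [n [_ Hn]]; exists n; apply HG, Hn.
    + apply Rle_lt_trans with
        (P (Hit rho (fun x => (exists n, A n x) /\ ~ union_upto A N x)) +
         P (fun w => exists n, Hit rho (fun x => A n x /\ ~ G n x) w)); [|lra].
      apply P_subadd2 with F; auto.
      * apply Hhit, SS_diff, union_upto_closed; auto.
      * apply sa_cunion; auto; intro n; apply Hhit, SS_diff, SS_Eint, HG; auto.
      * apply Hhit, SS_diff; auto. apply SS_Eint, union_upto_closed; auto. apply HG.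
      * intros w [x [Hx [HAx HGx]]]. destruct (classic (union_upto A N x)) as [[n [Hn HAn]]|HAN].
        -- right; exists n, x; repeat split; auto. intro; apply HGx; exists n; auto.
        -- left; exists x; auto.
Qed.

Definition approx_class (A : U -> Prop) : Prop :=
  SS A /\ inner_approx P E rho A /\ inner_approx P E rho (fun x => ~ A x).

Lemma approx_class_E (X : U -> Prop) : E X -> approx_class X.
Proof. intro HX; repeat split; auto using approx_E, approx_compl_E. Qed.

Lemma approx_class_compl (A : U -> Prop) : approx_class A -> approx_class (fun x => ~ A x).
Proof.
  intros [HA [Hin Hout]]; split; [apply sa_compl; auto | split; auto].
  replace (fun x => ~ ~ A x) with A; auto.
  apply set_ext; intro x; split; [auto | apply NNPP].
Qed.

(* The complement of a union is the intersection of the complements. *)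
Lemma approx_class_cunion (A : nat -> U -> Prop) :
  (forall n, approx_class (A n)) -> approx_class (fun x => exists n, A n x).
Proof.
  intro HA; repeat split.
  - apply sa_cunion; auto; apply HA.
  - apply approx_cunion; apply HA.
  - replace (fun x => ~ exists n, A n x) with (fun x => forall n, ~ A n x)
      by (apply set_ext; firstorder).
    apply approx_cinter; intro n; [apply sa_compl; auto|]; apply HA.
Qed.

Lemma approx_class_sigma : sigma_algebra approx_class.
Proof.
  split; [|split; [exact approx_class_compl | exact approx_class_cunion]].
  replace (fun _ : U => True) with (fun x : U => ~ (fun _ => False) x)
    by (apply set_ext; tauto).
  apply approx_class_compl, approx_class_E, HE0.
Qed.

(* Good-set principle: the good sets form a σ-algebra containing E, hence
   contain σ(E) ⊇ 𝒮. *)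
Theorem inner_approx_measurable :
  (forall X, SS X -> sigma_gen E X) -> forall A, SS A -> inner_approx P E rho A.
Proof.
  intros Hgen A HA. apply (Hgen A HA approx_class approx_class_sigma approx_class_E).
Qed.

End FiniteRandomSet.


Lemma meets_iff_count_nonzero {S : Type} (B : S -> Prop) (M : CS S) :
  (exists k, NA B M k /\ k <> Some 0%nat) <-> exists x, proj1_sig M x /\ B x.
Proof.
  split.
  - intros [[n|] [Hk Hne]]; simpl in Hk.
    + destruct Hk as [[|a l] [_ [Hlen Hin]]]; [simpl in Hlen; subst; congruence|].
      exists a; apply and_comm, Hin; left; reflexivity.
    + apply NNPP; intro Hno; apply Hk; exists 0%nat, nil.
      split; [constructor | split; [reflexivity|]].
      intro x; split; [intros [Hb Hx]; apply Hno; eauto | intros []].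
  - intros [x [Hx Hb]].
    destruct (classic (finite_set (fun y => B y /\ proj1_sig M y))) as [[n Hn]|Hinf].
    + exists (Some n); split; [exact Hn|]. intro Heq; injection Heq as ->.
      destruct Hn as [[|a l] [_ [Hlen Hin]]]; [|discriminate].
      apply (proj1 (Hin x)); auto.
    + exists None; split; [exact Hinf | discriminate].
Qed.

(* The hitting events of a cr-set are measurable: {tau meets B} = {N_B(tau) ≠ 0}. *)
Lemma cr_set_hit_measurable {Om S : Type} (F : (Om -> Prop) -> Prop)
  (SS : (S -> Prop) -> Prop) (tau : Om -> CS S) (B : S -> Prop) :
  cr_set F SS tau -> SS B -> F (Hit (fun w => proj1_sig (tau w)) B).
Proof.
  intros Htau HB.
  apply (Htau (fun M => exists x, proj1_sig M x /\ B x)).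
  apply sigma_gen_incl; exists B, (fun k => k <> Some 0%nat); split; [exact HB|].
  intro M; symmetry; apply meets_iff_count_nonzero.
Qed.

Definition truncation {Om S : Type} (pik : nat -> Om -> CS S) (N : nat) : Om -> S -> Prop :=
  fun w => union_upto (fun k => proj1_sig (pik k w)) N.

Lemma truncation_finite {Om S : Type} (pik : nat -> Om -> CS S) (N : nat) :
  (forall k w, finite_set (proj1_sig (pik k w))) -> finite_valued (truncation pik N).
Proof.
  intros Hfin w.
  apply (union_upto_closed (fun A => exists l, forall x, A x -> In x l)).
  - intros A B [lA HA] [lB HB]; exists (lA ++ lB).
    intros x [Hx|Hx]; apply in_or_app; auto.
  - intro k; destruct (Hfin k w) as [n [l [_ [_ Hl]]]]; exists l; intro x; apply Hl.
Qed.

Lemma truncation_hit_measurable {Om S : Type} (F : (Om -> Prop) -> Prop)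
  (SS : (S -> Prop) -> Prop) (pik : nat -> Om -> CS S) (N : nat) (B : S -> Prop) :
  sigma_algebra F -> (forall k, cr_set F SS (pik k)) -> SS B ->
  F (Hit (truncation pik N) B).
Proof.
  intros HF Hpik HB.
  replace (Hit (truncation pik N) B)
    with (union_upto (fun k => Hit (fun w => proj1_sig (pik k w)) B) N)
    by (apply set_ext; intro w; firstorder).
  apply union_upto_closed; [apply sa_union2; auto|].
  intro k; apply cr_set_hit_measurable with SS; auto.
Qed.

Lemma Hit_truncations {Om S : Type} (pi : Om -> CS S) (pik : nat -> Om -> CS S)
  (B : S -> Prop) :
  (forall w x, proj1_sig (pi w) x <-> exists k, proj1_sig (pik k w) x) ->
  Hit (fun w => proj1_sig (pi w)) B = (fun w => exists N, Hit (truncation pik N) B w).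
Proof.
  intro Hun; apply set_ext; intro w; split.
  - intros [x [Hx Hb]]; destruct (proj1 (Hun w x) Hx) as [k Hk].
    exists k, x; split; [exists k; auto | exact Hb].
  - intros [N [x [[k [_ Hk]] Hb]]]; exists x; split; [apply Hun; eauto | exact Hb].
Qed.

Lemma constructive_hit_measurable {Om S : Type} (F : (Om -> Prop) -> Prop)
  (SS : (S -> Prop) -> Prop) (pi : Om -> CS S) (B : S -> Prop) :
  sigma_algebra F -> constructive F SS pi -> SS B -> F (Hit (fun w => proj1_sig (pi w)) B).
Proof.
  intros HF [pik [Hpik Hun]] HB; rewrite (Hit_truncations pi pik B Hun).
  apply sa_cunion; auto; intro N.
  apply truncation_hit_measurable with SS; auto; apply Hpik.
Qed.

(* Pick a truncation rho_N with P(rho_N meets A)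
   close to T_pi(A), then G approximating A inside for rho_N. *)
Lemma constructive_inner_approx (Om : Type) (F : (Om -> Prop) -> Prop)
  (P : (Om -> Prop) -> R) (S : Type) (SS : (S -> Prop) -> Prop)
  (E : (S -> Prop) -> Prop) (pi : Om -> CS S) :
  probability F P -> sigma_algebra SS ->
  (forall A B, E A -> E B -> E (fun x => A x /\ B x)) ->
  (forall X, sigma_gen E X <-> SS X) -> E (fun _ => False) ->
  (forall X, E X -> sigma_unions (Eint E) X) -> constructive F SS pi ->
  forall A, SS A -> forall eps, eps > 0 ->
    exists G, Eint E G /\ (forall x, G x -> A x) /\ hitting P pi A - eps < hitting P pi G.
Proof.
  intros HP HSS Hcap Hgen HE0 HEu Hcon A HA eps Heps.
  assert (HF := proj1 HP).
  assert (Hpi_hit : forall B, SS B -> F (Hit (fun w => proj1_sig (pi w)) B))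
    by (intros; apply constructive_hit_measurable with SS; auto).
  destruct Hcon as [pik [Hpik Hun]].
  assert (HESS : forall X, E X -> SS X)
    by (intros X HX; apply (proj1 (Hgen X)), sigma_gen_incl, HX).
  assert (Hhit : forall N B, SS B -> F (Hit (truncation pik N) B))
    by (intros; apply truncation_hit_measurable with SS; auto; apply Hpik).
  (* the hitting events of the truncations increase to that of pi *)
  assert (Hcv := P_increasing_union F P HP (fun N => Hit (truncation pik N) A)
                   (fun N => Hhit N A HA)
                   (fun N => Hit_mono_rho _ _ _ (fun w => union_upto_incr _ N))).
  cbv beta in Hcv.
  rewrite <- (Hit_truncations pi pik A Hun) in Hcv.
  destruct (Hcv (eps / 2)) as [N HN]; [lra|].
  specialize (HN N (le_n _)); unfold Rdist in HN; apply Rabs_def2 in HN.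
  destruct (inner_approx_measurable F P SS E (truncation pik N) HP HSS Hcap HE0 HESS HEu
              (Hhit N) (truncation_finite pik N (fun k => proj2 (Hpik k)))
              (fun X HX => proj2 (Hgen X) HX) A HA (eps / 2)) as [G [HG [HGA Herr]]]; [lra|].
  exists G; split; [exact HG | split; [exact HGA|]].
  assert (HSG : SS G) by (apply Eint_measurable with E; auto).
  assert (Hsplit : P (Hit (truncation pik N) A) <=
                   P (Hit (truncation pik N) G) + P (Hit (truncation pik N) (fun x => A x /\ ~ G x))).
  { apply P_subadd2 with F; auto. apply Hhit, sa_diff; auto.
    intros w [x [Hx Ha]]; destruct (classic (G x)); [left|right]; exists x; auto. }
  assert (Hbelow : P (Hit (truncation pik N) G) <= hitting P pi G).
  { apply P_mono with F; auto. apply Hpi_hit; auto.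
    intros w [x [[k [_ Hk]] Hg]]; exists x; split; [apply Hun; eauto | exact Hg]. }
  unfold hitting in *; fold (Hit (fun w => proj1_sig (pi w)) A). lra.
Qed.

Lemma is_lub_of_approx (X : R -> Prop) (s : R) :
  (forall t, X t -> t <= s) -> (forall eps, eps > 0 -> exists t, X t /\ s - eps < t) ->
  is_lub X s.
Proof.
  intros Hub Happrox; split; [exact Hub|].
  intros b Hb; apply Rnot_lt_le; intro Hlt.
  destruct (Happrox (s - b)) as [t [Ht Hts]]; [lra|].
  specialize (Hb t Ht); lra.
Qed.

(* Theorem 5.7: the hitting function of a constructive cr-set is inner regular
   with respect to E_int. *)
Theorem theorem5p7 (Om : Type) (F : (Om -> Prop) -> Prop) (P : (Om -> Prop) -> R)
  (S : Type) (SS : (S -> Prop) -> Prop) (E : (S -> Prop) -> Prop)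
  (pi : Om -> CS S) :
  probability F P ->
  sigma_algebra SS ->
  (forall A B, E A -> E B -> E (fun x => A x /\ B x)) ->
  (forall X, sigma_gen E X <-> SS X) ->
  E (fun _ => False) ->
  (forall X, E X -> sigma_unions (Eint E) X) ->
  cr_set F SS pi ->
  constructive F SS pi ->
  forall A, SS A ->
    is_lub (fun t => exists G, Eint E G /\ (forall x, G x -> A x) /\ t = hitting P pi G)
           (hitting P pi A).
Proof.
  intros HP HSS Hcap Hgen HE0 HEu _ Hcon A HA.
  assert (HESS : forall X, E X -> SS X)
    by (intros X HX; apply (proj1 (Hgen X)), sigma_gen_incl, HX).
  apply is_lub_of_approx.
  - (* T_pi is monotone *)
    intros t [G [HG [HGA ->]]].
    assert (HSG : SS G) by (apply Eint_measurable with E; auto).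
    apply (P_mono F P HP); [| | exact (Hit_mono _ _ _ HGA)];
      apply (constructive_hit_measurable F SS pi); auto; apply HP.
  - intros eps Heps.
    destruct (constructive_inner_approx Om F P S SS E pi HP HSS Hcap Hgen HE0 HEu Hcon A HA eps Heps)
      as [G [HG [HGA Hclose]]].
    exists (hitting P pi G); split; eauto.
Qed.
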